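(* Let $k\ge 0$ be an integer and let $G$ be a graph with $\mu_\alpha(G)\leq k$. Then every internal vertex of $G$ is adjacent to at most $k+1$ leaves.
   Context: All graphs are finite and simple. For a graph $H$, $\alpha(H)$ is the maximum size of an independent set, $i(H)$ the minimum size of an inclusion-maximal independent set, and $\mu_\alpha(H)=\alpha(H)-i(H)$. Let $U$ be the set of vertices of $G$ whose connected component is a complete graph. In $G-U$, vertices of degree $1$ are called leaves and the others are called internal vertices. *)

From mathcomp Require Import all_boot.
Set Implicit Arguments. Unset Strict Implicit. Unset Printing Implicit Defensive.

Section Graph.
Variables (T : finType) (e : rel T).

Definition simple_graph := symmetric e /\ irreflexive e.

Definition independent (S : {set T}) : bool :=
  [forall x in S, forall y in S, ~~ e x y].

Definition maximal_independent (S : {set T}) : bool :=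
  independent S && [forall x, (x \notin S) ==> ~~ independent (x |: S)].

Definition alpha : nat := \max_(S : {set T} | independent S) #|S|.

(* i(G): minimum size of an inclusion-maximal independent set
   (the default #|T| is never attained spuriously since maximal independent
    sets exist and have size <= #|T|) *)
Definition indep_domination : nat :=
  \big[minn/#|T|]_(S : {set T} | maximal_independent S) #|S|.

(* mu_alpha(G) = alpha(G) - i(G)  (note i(G) <= alpha(G)) *)
Definition mu_alpha : nat := alpha - indep_domination.

Definition in_complete_component (x : T) : bool :=
  [forall y, forall z, (connect e x y && connect e x z) ==> ((y == z) || e y z)].

Definition U : {set T} := [set x | in_complete_component x].

Definition degGU (x : T) : nat := #|[set y | (y \notin U) && e x y]|.

Definition leaf (x : T) : bool := (x \notin U) && (degGU x == 1).
Definition internal (x : T) : bool := (x \notin U) && (degGU x != 1).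

End Graph.

(** A leaf adjacent to [v] has [v] as its only neighbour.  Extend [{v}] to a
    maximal independent set [S], so [i(G) <= |S|]; trading [v] for the leaves
    [L] adjacent to it keeps [S] independent, so
    [alpha(G) >= |L| + |S| - 1 >= |L| + i(G) - 1], i.e. [|L| <= mu_alpha(G) + 1]. *)
From HB Require Import structures.
From mathcomp Require Import all_boot zify.

Set Implicit Arguments.
Unset Strict Implicit.
Unset Printing Implicit Defensive.

HB.instance Definition _ := SemiGroup.isComLaw.Build nat minn minnA minnC.

Section SimpleGraph.
Variables (T : finType) (e : rel T).

Lemma independentP (S : {set T}) :
  reflect {in S &, forall x y, ~~ e x y} (independent e S).
Proof.
apply: (iffP forall_inP) => [indS x y xS yS | indS x xS].
  by move/forall_inP: (indS x xS); apply.
by apply/forall_inP => y; apply: indS.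
Qed.

Lemma maxset_maximal_independent (S : {set T}) :
  maxset (independent e) S -> maximal_independent e S.
Proof.
move=> maxS; rewrite /maximal_independent (maxsetp maxS).
apply/forallP => x; apply/implyP => xS; apply/negP => indxS.
have /setP/(_ x) := maxsetsup maxS indxS (subsetUr [set x] S).
by rewrite setU11 (negbTE xS).
Qed.

Lemma maximal_independent_exists (C : {set T}) : independent e C ->
  exists2 S, maximal_independent e S & C \subset S.
Proof.
move=> /maxset_exists[S maxS CS].
by exists S; first exact: maxset_maximal_independent.
Qed.

Lemma card_independent_le_alpha {S : {set T}} :
  independent e S -> #|S| <= alpha e.
Proof. exact: (@leq_bigmax_cond _ (independent e) (fun S : {set T} => #|S|)). Qed.

Lemma indep_domination_le_card {S : {set T}} :
  maximal_independent e S -> indep_domination e <= #|S|.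
Proof. by move=> maxS; rewrite /indep_domination (bigD1 S) //= geq_minl. Qed.

Hypotheses (sym_e : symmetric e) (irr_e : irreflexive e).

Lemma independent_set1 (v : T) : independent e [set v].
Proof. by apply/independentP => x y /set1P -> /set1P ->; rewrite irr_e. Qed.

Section Pendants.
Variables (v : T) (S L : {set T}).
Hypotheses (indS : independent e S) (vS : v \in S).
Hypothesis pendantL : {in L, forall y z, e y z = (z == v)}.

Lemma disjoint_pendants : [disjoint L & S].
Proof.
apply/pred0P => y /=; apply/negP => /andP[yL yS].
by move/independentP: indS => /(_ y v yS vS); rewrite pendantL // eqxx.
Qed.

Lemma independent_pendants_swap : independent e (L :|: S :\ v).
Proof.
have vL : v \notin L by apply/negP => /pendantL/(_ v); rewrite irr_e eqxx.
have pendantL' x y : y \in L -> e x y = (x == v) by move=> yL; rewrite sym_e pendantL.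
apply/independentP => x y /setUP[xL|/setD1P[xv xS]] /setUP[yL|/setD1P[yv yS]].
- by rewrite pendantL //; apply: contraNN vL => /eqP <-.
- by rewrite pendantL.
- by rewrite pendantL'.
- by move/independentP: indS; apply.
Qed.

Lemma card_pendants_le : #|L| + #|S| <= alpha e + 1.
Proof.
have := card_independent_le_alpha independent_pendants_swap.
have /disjoint_setI0 LSv0 : [disjoint L & S :\ v].
  exact: disjointWr (subsetDl S [set v]) disjoint_pendants.
rewrite cardsU LSv0 cards0 (cardsD1 v S) vS; lia.
Qed.

End Pendants.

Lemma adj_notin_U {x y : T} : x \notin U e -> e x y -> y \notin U e.
Proof.
move=> xU exy; apply: contra xU; rewrite !inE => /forallP yU.
apply/forallP => a; apply/forallP => b; apply/implyP => /andP[xa xb].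
have yx : connect e y x by apply: connect1; rewrite sym_e.
by move/forallP: (yU a) => /(_ b); rewrite (connect_trans yx xa) (connect_trans yx xb).
Qed.

Lemma leaf_adjE (y v : T) : leaf e y -> e v y -> forall z, e y z = (z == v).
Proof.
move=> /andP[yU /cards1P[w Nw]] evy z.
have NyE : [set z | (z \notin U e) && e y z] = [set z | e y z].
  by apply/setP => x; rewrite !inE; apply: andb_idl => /(adj_notin_U yU); rewrite inE.
have wv : w = v by apply/esym/set1P; rewrite -Nw NyE inE sym_e.
by move/setP/(_ z): Nw; rewrite NyE wv !inE.
Qed.

End SimpleGraph.

Theorem lemma5 (T : finType) (e : rel T) (k : nat) :
  simple_graph e -> mu_alpha e <= k ->
  forall v : T, internal e v ->
    #|[set y | leaf e y && e v y]| <= k.+1.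
Proof.
move=> [sym_e irr_e] mu_le_k v _.
have pendant : {in [set y | leaf e y && e v y], forall y z, e y z = (z == v)}.
  by move=> y /[!inE] /andP[ly evy]; apply: leaf_adjE.
have [S maxS /[1!sub1set] vS] : exists2 S, maximal_independent e S & [set v] \subset S.
  exact/maximal_independent_exists/(independent_set1 irr_e).
have indS : independent e S by case/andP: maxS.
have := card_pendants_le sym_e irr_e indS vS pendant.
have := indep_domination_le_card maxS.
move: mu_le_k; rewrite /mu_alpha; lia.
Qed.
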